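(* For every $p\ge2$ (i.e. $m=2^p>2$), the Sylvester matrix $H(2^p)$ has nonzero permanent. Consequently, when $n=m=2^p>2$ identical bosons are injected one per mode into the Sylvester interferometer $\frac{1}{\sqrt m}H(m)$, the output state with one boson in each mode is not suppressed.
   Context: For $m=2^p$, the Sylvester matrix $H(m)$ is defined recursively by $H(1)=[1]$ and $H(2^p)=\begin{bmatrix}H(2^{p-1})&H(2^{p-1})\\ H(2^{p-1})&-H(2^{p-1})\end{bmatrix}$. $\mathrm{perm}\,A=\sum_{\sigma\in S_m}\prod_{i=1}^m a_{i,\sigma(i)}$. For input $\vec s$ and output $\vec t$ (nondecreasing tuples of mode indices), the scattering matrix is $S_{i,j}=U_{t_i,s_j}$ and the bosonic amplitude is $\mathrm{perm}\,S/\sqrt{\prod_k\mu_k(\vec s)!\prod_k\mu_k(\vec t)!}$ with $\mu_k(\vec t)=|\{i:t_i=k\}|$; an output is suppressed if its amplitude is zero. *)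

From HB Require Import structures.
From mathcomp Require Import all_boot all_order all_algebra all_fingroup all_field.
Set Implicit Arguments. Unset Strict Implicit. Unset Printing Implicit Defensive.
Import Order.TTheory GRing.Theory Num.Theory.
Local Open Scope ring_scope.

Lemma sylvester_dim (p : nat) : (2 ^ p + 2 ^ p = 2 ^ p.+1)%N.
Proof. by rewrite expnS mul2n addnn. Qed.

Fixpoint sylvester (R : pzRingType) (p : nat) : 'M[R]_(2 ^ p) :=
  match p return 'M[R]_(2 ^ p) with
  | 0 => 1%:M
  | p'.+1 =>
      let H := sylvester R p' in
      castmx (sylvester_dim p', sylvester_dim p') (block_mx H H H (- H))
  end.

Definition permanent (R : pzRingType) (m : nat) (A : 'M[R]_m) : R :=
  \sum_(s : 'S_m) \prod_(i < m) A i (s i).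

Definition occupation (m n : nat) (t : n.-tuple 'I_m) (k : 'I_m) : nat :=
  count_mem k t.

Definition scattering (m n : nat) (U : 'M[algC]_m) (s t : n.-tuple 'I_m)
  : 'M[algC]_n := \matrix_(i < n, j < n) U (tnth t i) (tnth s j).

Definition bosonic_amplitude (m n : nat) (U : 'M[algC]_m) (s t : n.-tuple 'I_m)
  : algC :=
  permanent (scattering U s t) /
  sqrtC ((\prod_(k < m) ((occupation s k)`!)%:R) *
         (\prod_(k < m) ((occupation t k)`!)%:R)).

Definition suppressed (m n : nat) (U : 'M[algC]_m) (s t : n.-tuple 'I_m) : bool :=
  bosonic_amplitude U s t == 0.

Definition sylvester_interferometer (p : nat) : 'M[algC]_(2 ^ p) :=
  (sqrtC (2 ^ p)%:R)^-1 *: sylvester algC p.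

From HB Require Import structures.
From mathcomp Require Import all_boot all_order all_algebra all_fingroup all_field.
From mathcomp Require Import ring zify.
Set Implicit Arguments. Unset Strict Implicit. Unset Printing Implicit Defensive.
Import Order.TTheory GRing.Theory Num.Theory.
Local Open Scope ring_scope.

(* Write m = 2^p.  For a set S of column labels, let Q(S) be the permanent of
   the submatrix of H(m) with these columns.  Splitting the rows of
   H(2m) = [[H, H], [H, -H]] into halves expresses Q(S) as a signed sum, over
   the ways to split S in two, of products of two such permanents of H(m).
   Since H i j = (-1)^<i,j> on binary digits, the product of the columns in S
   is the all-ones vector exactly when the labels in S have zero XOR.  By
   induction, Q(S) vanishes unless the labels in S XOR to zero, and then, for
   #|S| = m, it is 2^(m-1) times an odd number: the terms of the sum pair up under
   complementation, and the number of zero-XOR halves containing a fixed label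
   is odd.  That count is computed with character sums, which turn it into the
   elementary symmetric functions e_m of 2m signs with product 1; these are
   congruent to C(2m, m) modulo 2^(p+2), and C(2m, m) = 2 mod 4.  The labels
   0, ..., 2^p - 1 have zero XOR when p >= 2, so perm H(2^p) <> 0; and for one
   boson per mode the amplitude is just the permanent of (1/sqrt m) H(m). *)

Lemma disjoint_setU_eq (T : finType) (A B S : {set T}) :
  [disjoint A & B] && (A :|: B == S) = (A \subset S) && (B == S :\: A).
Proof.
apply/andP/andP => [[dAB /eqP <-] | [sAS /eqP ->]].
  rewrite subsetUl setDUl setDv set0U; split=> //.
  by apply/eqP/esym/setDidPl; rewrite disjoint_sym.
split; first by rewrite disjoints_subset setCD subsetUr.
by apply/eqP/setP => x; rewrite !inE; case: (boolP (x \in A)) => // /(subsetP sAS).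
Qed.

Lemma setDDK (T : finType) (S Y : {set T}) : Y \subset S -> S :\: (S :\: Y) = Y.
Proof. by move=> sYS; rewrite setDDr setDv set0U (setIidPr sYS). Qed.

Section ComplementSums.

Variables (R : nmodType) (J : finType) (S : {set J}).
Implicit Type F : {set J} -> R.

Lemma sum_subset_compl F :
  \sum_(Y : {set J} | Y \subset S) F Y = \sum_(Y : {set J} | Y \subset S) F (S :\: Y).
Proof.
rewrite (reindex_onto (fun Y : {set J} => S :\: Y) (fun Y : {set J} => S :\: Y)) => [|Y];
  last exact: setDDK.
apply: eq_bigl => Y; rewrite subsetDl /=.
by apply/eqP/idP => [<- | /setDDK //]; rewrite subsetDl.
Qed.

Lemma sum_subset_pair j0 F : j0 \in S ->
  (forall Y : {set J}, Y \subset S -> F (S :\: Y) = F Y) ->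
  \sum_(Y : {set J} | Y \subset S) F Y =
  (\sum_(Y : {set J} | (Y \subset S) && (j0 \in Y)) F Y) *+ 2.
Proof.
move=> j0S F_compl; rewrite (bigID (fun Y : {set J} => j0 \in Y)) /= mulr2n.
congr (_ + _).
rewrite (reindex_onto (fun Y : {set J} => S :\: Y) (fun Y : {set J} => S :\: Y))
  => [|Y /andP [sYS _]]; last exact: setDDK.
apply: eq_big => Y; last by case/andP => _ /eqP <-; rewrite F_compl // subsetDl.
rewrite subsetDl /= !inE j0S andbT negbK.
case: (j0 \in Y); rewrite ?andbF ?andbT //=.
by apply/eqP/idP => [<- | sYS]; [exact: subsetDl | exact: setDDK].
Qed.

End ComplementSums.

Lemma sum_odd_multiples (I : finType) (P B : pred I) (e : nat) (t : I -> int) (r : int) :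
  \sum_(i | P i) (if B i then 1 else 0) = 2 * r + 1 ->
  exists s, \sum_(i | P i) (if B i then 2 ^+ e * (2 * t i + 1) else 0) =
            2 ^+ e * (2 * s + 1).
Proof.
move=> count_B; exists (\sum_(i | P i) (if B i then t i else 0) + r).
have -> : \sum_(i | P i) (if B i then 2 ^+ e * (2 * t i + 1) else 0) =
    2 ^+ e * (2 * \sum_(i | P i) (if B i then t i else 0) +
              \sum_(i | P i) (if B i then 1 else 0)).
  rewrite mulr_sumr -big_split mulr_sumr; apply: eq_bigr => i _.
  by case: (B i); rewrite ?mulr0 ?addr0 //; ring.
by rewrite count_B; ring.
Qed.

Definition is_sign (x : int) : bool := (x == 1) || (x == -1).

Lemma is_signM x y : is_sign x -> is_sign y -> is_sign (x * y).
Proof.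
by case/orP => /eqP ->; case/orP => /eqP ->;
  rewrite /is_sign ?mul1r ?mulN1r ?opprK eqxx ?orbT.
Qed.

Lemma is_sign_prod (I : finType) (P : pred I) (F : I -> int) :
  (forall i, P i -> is_sign (F i)) -> is_sign (\prod_(i | P i) F i).
Proof.
by move=> sign_F; apply: (big_ind is_sign); rewrite /is_sign ?eqxx //; apply: is_signM.
Qed.

Lemma is_sign_signr (b : bool) : is_sign ((-1) ^+ b).
Proof. by case: b; rewrite /is_sign eqxx ?orbT. Qed.

Lemma is_sign_sqr x : is_sign x -> x * x = 1.
Proof. by case/orP => /eqP ->; rewrite ?mulN1r ?opprK ?mul1r. Qed.

Lemma permanentZ (R : comPzRingType) m (c : R) (A : 'M[R]_m) :
  permanent (c *: A) = c ^+ m * permanent A.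
Proof.
rewrite /permanent mulr_sumr; apply: eq_bigr => s _.
rewrite (eq_bigr (fun i => c * A i (s i))) => [|i _]; last by rewrite mxE.
by rewrite big_split /= prodr_const card_ord.
Qed.

Lemma permanent_map (R S : pzRingType) (f : {rmorphism R -> S}) m (A : 'M[R]_m) :
  permanent (map_mx f A) = f (permanent A).
Proof.
rewrite /permanent rmorph_sum; apply: eq_bigr => s _.
by rewrite rmorph_prod; apply: eq_bigr => i _; rewrite mxE.
Qed.

Lemma bosonic_amplitude_ord_tuple m (U : 'M[algC]_m) :
  bosonic_amplitude U (ord_tuple m) (ord_tuple m) = permanent U.
Proof.
rewrite /bosonic_amplitude.
have -> : scattering U (ord_tuple m) (ord_tuple m) = U.
  by apply/matrixP => i j; rewrite !mxE !tnth_ord_tuple.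
have occ1 k : occupation (ord_tuple m) k = 1%N.
  by rewrite /occupation val_ord_tuple count_uniq_mem ?enum_uniq ?mem_enum.
rewrite (eq_bigr (fun _ => 1)) => [|k _]; last by rewrite occ1.
by rewrite big1 // mulr1 sqrtC1 divr1.
Qed.

(** * Central binomial coefficients and symmetric functions of signs *)

Section CentralBinomial.

Local Open Scope nat_scope.

Lemma fact_double m : exists2 o, odd o & (2 * m)`! = 2 ^ m * m`! * o.
Proof.
elim: m => [|m [o odd_o IH]]; first by exists 1.
exists (o * (2 * m).+1); first by rewrite oddM odd_o /= mul2n odd_double.
have -> : 2 * m.+1 = (2 * m).+2 by lia.
by rewrite !factS IH expnS; ring.
Qed.

Lemma fact_pow2 p : exists2 o, odd o & (2 ^ p)`! = 2 ^ (2 ^ p).-1 * o.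
Proof.
elim: p => [|p [o odd_o IH]]; first by exists 1.
have [o' odd_o' fact2] := fact_double (2 ^ p).
exists (o * o'); first by rewrite oddM odd_o odd_o'.
have k_gt0 : 0 < 2 ^ p by rewrite expn_gt0.
have -> : (2 ^ p.+1).-1 = 2 ^ p + (2 ^ p).-1 by rewrite expnS; lia.
by rewrite expnS fact2 IH expnD; ring.
Qed.

Lemma bin_central_pow2 p : exists2 c, odd c & 'C(2 * 2 ^ p, 2 ^ p) = 2 * c.
Proof.
set k := 2 ^ p; have k_gt0 : 0 < k by rewrite expn_gt0.
have [o odd_o fact2k] := fact_double k.
have [o' odd_o' factk] := fact_pow2 p; rewrite -/k in factk.
have binCk : 'C(2 * k, k) * k`! = 2 ^ k * o.
  have := bin_fact (leq_addl k k); rewrite addnK addnn -mul2n fact2k mulnA [RHS]mulnAC.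
  by move/eqP; rewrite eqn_pmul2r ?fact_gt0 // => /eqP.
have binCo : 'C(2 * k, k) * o' = 2 * o.
  apply/eqP; rewrite -(eqn_pmul2l (_ : 0 < 2 ^ k.-1)) ?expn_gt0 //; apply/eqP.
  by rewrite mulnCA -factk binCk -[in LHS](prednK k_gt0) expnS; ring.
have even_C : ~~ odd 'C(2 * k, k).
  by apply/negP => odd_C; move: (congr1 odd binCo); rewrite oddM odd_C odd_o' mul2n odd_double.
have eC : 'C(2 * k, k) = 2 * 'C(2 * k, k)./2.
  by rewrite -[LHS]odd_double_half (negbTE even_C) add0n -mul2n.
have half_o : 'C(2 * k, k)./2 * o' = o.
  by apply/eqP; rewrite -(eqn_pmul2l (isT : 0 < 2)) mulnA -eC binCo.
exists 'C(2 * k, k)./2 => //.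
by move: odd_o; rewrite -half_o oddM => /andP [].
Qed.

Lemma bin_central_succ m : m.+1 * 'C(2 * m.+1, m.+1) = 2 * (2 * m).+1 * 'C(2 * m, m).
Proof.
have binS := mul_bin_diag (2 * m.+1) m.
have binS' := mul_bin_diag (2 * m).+1 m.
have binC : 'C((2 * m).+1, m.+1) = 'C((2 * m).+1, m).
  by rewrite -bin_sub; [congr 'C(_, _); lia | lia].
rewrite (_ : (2 * m.+1).-1 = (2 * m).+1) in binS; last by lia.
by rewrite -binS -mulnA -binC -binS' mulnA.
Qed.

Lemma dvdn_bin_central p j : j < 2 ^ p ->
  2 ^ (p - j) %| 'C(2 * ((2 ^ p).-1 - j), (2 ^ p).-1 - j).
Proof.
set k := 2 ^ p; have k_gt0 : 0 < k by rewrite expn_gt0.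
have coprime_odd e n : odd n -> coprime (2 ^ e) n.
  by move=> odd_n; apply: coprimeXl; rewrite coprime2n.
have odd_S m : odd (2 * m).+1 by rewrite /= mul2n odd_double.
elim: j => [_ | j IH lt_j].
  rewrite !subn0; have [c _ binC] := bin_central_pow2 p.
  have := bin_central_succ k.-1; rewrite prednK // -/k binC => eq_C.
  rewrite -(Gauss_dvdr _ (coprime_odd _ _ (odd_S k.-1))).
  apply/dvdnP; exists c; apply/eqP; rewrite -(eqn_pmul2l (isT : 0 < 2)).
  by rewrite mulnA -eq_C /k; apply/eqP; ring.
set m := k.-1 - j.+1; have em : k.-1 - j = m.+1 by rewrite /m; lia.
have := IH (ltnW lt_j); rewrite em.
case e_pj : (p - j) => [|e]; first by rewrite (_ : p - j.+1 = 0) ?dvd1n //; lia.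
rewrite (_ : p - j.+1 = e); last by lia.
rewrite expnS => dvd_C; rewrite -(Gauss_dvdr _ (coprime_odd _ _ (odd_S m))).
by rewrite -(dvdn_pmul2l (isT : 0 < 2)) mulnA -bin_central_succ dvdn_mull.
Qed.

End CentralBinomial.

Lemma coef_Xadd1_exp n m : (('X + 1 : {poly int}) ^+ n)`_m = 'C(n, m)%:R.
Proof.
rewrite exprD1n coef_sum.
under eq_bigr => i _ do rewrite coefMn coefXn.
case: (ltnP m n.+1) => [lt_mn | lt_nm].
  rewrite (bigD1 (Ordinal lt_mn)) //= eqxx big1 ?addr0 // => i.
  by move=> /negbTE; rewrite -(inj_eq val_inj) /= eq_sym => ->; rewrite mul0rn.
rewrite bin_small // big1 // => i _.
have : (i < m)%N by apply: leq_trans (ltn_ord i) lt_nm.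
by rewrite ltn_neqAle eq_sym => /andP [/negbTE -> _]; rewrite mul0rn.
Qed.

(* The elementary symmetric function e_m of 2(m - b) ones and 2b minus ones. *)
Definition esym_signs (m b : nat) : int :=
  (('X + 1 : {poly int}) ^+ (2 * (m - b)) * (1 - 'X) ^+ (2 * b))`_m.

Lemma esym_signs0 m : esym_signs m 0 = 'C(2 * m, m)%:R.
Proof. by rewrite /esym_signs subn0 muln0 expr0 mulr1 coef_Xadd1_exp. Qed.

(* From (1 - X)^2 = (1 + X)^2 - 4 X. *)
Lemma esym_signsS m b : (b < m)%N ->
  esym_signs m b.+1 = esym_signs m b - 4 * esym_signs m.-1 b.
Proof.
case: m => [//|m] lt_bm; rewrite /esym_signs /=.
rewrite (_ : 2 * (m.+1 - b.+1) = 2 * (m - b))%N; last by lia.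
rewrite (_ : 2 * (m.+1 - b) = 2 * (m - b) + 2)%N; last by lia.
rewrite (_ : 2 * b.+1 = 2 * b + 2)%N; last by lia.
rewrite [(1 - 'X) ^+ _]exprD [('X + 1) ^+ (_ + 2)]exprD.
set A := ('X + 1 : {poly int}) ^+ (2 * (m - b)).
set B := (1 - 'X : {poly int}) ^+ (2 * b).
have -> : A * (B * (1 - 'X) ^+ 2) = A * ('X + 1) ^+ 2 * B - 'X * ((A * B) *+ 4).
  by rewrite mulrnAr; ring.
by rewrite coefB coefXM /= coefMn mulrAC mulr_natl.
Qed.

Lemma dvdz_esym_signs p m b : (m < 2 ^ p)%N -> (b <= m)%N ->
  ((2 ^+ (p - ((2 ^ p).-1 - m)) : int) %| esym_signs m b)%Z.
Proof.
have lt_p2p : (p < 2 ^ p)%N by rewrite ltn_expl.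
elim: m b => [|m IH] b lt_m le_bm.
  move: le_bm; rewrite leqn0 => /eqP ->.
  by rewrite esym_signs0 (_ : p - _ = 0)%N ?dvd1z //; lia.
elim: b le_bm => [_|b IHb le_bm].
  rewrite esym_signs0 -natrX dvdzE !natz !absz_nat.
  have := @dvdn_bin_central p ((2 ^ p).-1 - m.+1) _.
  by rewrite (_ : (2 ^ p).-1 - ((2 ^ p).-1 - m.+1) = m.+1)%N; [apply; lia | lia].
rewrite esym_signsS // rpredB //; first by apply: IHb; lia.
have : ((2 ^+ 2 * 2 ^+ (p - ((2 ^ p).-1 - m)) : int) %| 4 * esym_signs m b)%Z.
  by apply: dvdz_mul => //; apply: IH; lia.
by apply: dvdz_trans; rewrite -exprD; apply: dvdz_exp2l; lia.
Qed.

Lemma esym_signs_central p b : (b <= 2 ^ p)%N ->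
  ((2 ^+ p.+2 : int) %| esym_signs (2 ^ p) b - 'C(2 * 2 ^ p, 2 ^ p)%:R)%Z.
Proof.
have k_gt0 : (0 < 2 ^ p)%N by rewrite expn_gt0.
elim: b => [_|b IH le_b]; first by rewrite esym_signs0 subrr dvdz0.
rewrite esym_signsS // addrAC rpredB //; first by apply: IH; lia.
have := @dvdz_esym_signs p (2 ^ p).-1 b; rewrite subnn subn0 => dvd_e.
by rewrite exprS exprS mulrA dvdz_mul // dvd_e //; lia.
Qed.

Lemma sum_prod_subsets_coef (J : finType) (X : {set J}) (e : J -> int) m :
  \sum_(Y : {set J} | (Y \subset X) && (#|Y| == m)) \prod_(j in Y) e j =
  (\prod_(j in X) ((e j)%:P * 'X + 1))`_m.
Proof.
rewrite [in RHS]big_mkcond /=.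
have -> : \prod_j (if j \in X then (e j)%:P * 'X + 1 else 1) =
          \prod_j ((if j \in X then (e j)%:P * 'X else 0) + 1 : {poly int}).
  by apply: eq_bigr => j _; case: (j \in X); rewrite ?add0r.
rewrite bigA_distr coef_sum [in LHS]big_mkcond /=.
apply: eq_bigr => Y _.
case sub: (Y \subset X).
  rewrite (eq_bigr (fun j => if j \in Y then (e j)%:P * 'X else 1)); last first.
    by move=> j _; case: ifP => // jY; rewrite (subsetP sub j jY).
  rewrite -big_mkcond /= big_split /= -rmorph_prod prodr_const coefCM coefXn /=.
  have -> : (m == #|Y|) = (#|Y| == m) by rewrite eq_sym.
  by case: (#|Y| == m); rewrite ?mulr1 ?mulr0.
move/negbT: sub => /subsetPn [j jY jX].
by rewrite [\prod_i _](bigD1 j) //= jY (negbTE jX) mul0r coef0.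
Qed.

Lemma prod_signs_poly (J : finType) (X : {set J}) (e : J -> int) :
  {in X, forall j, is_sign (e j)} ->
  let Xn := [set j in X | e j == -1] in
  \prod_(j in X) ((e j)%:P * 'X + 1) = (1 - 'X) ^+ #|Xn| * ('X + 1) ^+ #|X :\: Xn|
  /\ \prod_(j in X) e j = (-1) ^+ #|Xn|.
Proof.
move=> sign_e Xn.
have sXnX : Xn \subset X by apply/subsetP => j; rewrite inE => /andP [].
have e_neg j : j \in Xn -> e j = -1 by rewrite inE => /andP [_ /eqP].
have e_pos j : j \in X :\: Xn -> e j = 1.
  rewrite !inE => /andP [nXn jX]; move: nXn; rewrite jX /=.
  by case/orP: (sign_e j jX) => /eqP ->.
have prod_split (R : comPzRingType) (F : J -> R) :
    \prod_(j in X) F j = \prod_(j in Xn) F j * \prod_(j in X :\: Xn) F j.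
  by rewrite (big_setID Xn) /= (setIidPr sXnX).
rewrite !prod_split; split.
  congr (_ * _); rewrite -prodr_const; apply: eq_bigr => j.
    by move/e_neg ->; rewrite polyCN polyC1 mulN1r addrC.
  by move/e_pos ->; rewrite mul1r.
rewrite [X in _ * X]big1 ?mulr1; last by move=> j /e_pos.
by rewrite -prodr_const; apply: eq_bigr => j /e_neg.
Qed.

Lemma sum_prod_halves_signs p (J : finType) (X : {set J}) (e : J -> int) :
  {in X, forall j, is_sign (e j)} -> #|X| = (2 * 2 ^ p)%N -> \prod_(j in X) e j = 1 ->
  ((2 ^+ p.+2 : int) %| \sum_(Y : {set J} | (Y \subset X) && (#|Y| == 2 ^ p)%N)
        \prod_(j in Y) e j - ('C(2 * 2 ^ p, 2 ^ p))%:R)%Z.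
Proof.
move=> sign_e cardX prod_e; rewrite sum_prod_subsets_coef.
have [-> prod_eE] := prod_signs_poly sign_e.
set Xn := [set j in X | e j == -1] in prod_eE *.
have sXnX : Xn \subset X by apply/subsetP => j; rewrite inE => /andP [].
have even_Xn : ~~ odd #|Xn|.
  by apply/negP => odd_Xn; move: prod_e; rewrite prod_eE -signr_odd odd_Xn.
have eXn : #|Xn| = (2 * #|Xn|./2)%N.
  by rewrite -[LHS]odd_double_half (negbTE even_Xn) add0n mul2n.
have eXp : #|X :\: Xn| = (2 * (2 ^ p - #|Xn|./2))%N.
  by rewrite cardsDS // cardX {1}eXn -mulnBr.
rewrite mulrC eXn eXp.
apply: esym_signs_central.
by rewrite -(leq_pmul2l (isT : (0 < 2)%N)) -eXn -cardX subset_leq_card.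
Qed.

(** * Sylvester matrices *)

Section Halves.

Variable p : nat.

Definition ord_top (i : 'I_(2 ^ p)) : 'I_(2 ^ p.+1) :=
  cast_ord (sylvester_dim p) (lshift (2 ^ p) i).

Definition ord_bot (i : 'I_(2 ^ p)) : 'I_(2 ^ p.+1) :=
  cast_ord (sylvester_dim p) (rshift (2 ^ p) i).

(* Every x : 'I_(2 ^ p.+1) is 2 ^ p * in_bot x + ord_low x. *)
Definition ord_low (x : 'I_(2 ^ p.+1)) : 'I_(2 ^ p) :=
  match split (cast_ord (esym (sylvester_dim p)) x) with inl y | inr y => y end.

Definition in_bot (x : 'I_(2 ^ p.+1)) : bool :=
  if split (cast_ord (esym (sylvester_dim p)) x) is inr _ then true else false.

Lemma ord_splitK x : x = if in_bot x then ord_bot (ord_low x) else ord_top (ord_low x).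
Proof.
rewrite /in_bot /ord_low /ord_top /ord_bot; set y := cast_ord _ x.
have -> : x = cast_ord (sylvester_dim p) y by rewrite /y cast_ordKV.
by have := splitK y; case: (split y) => a /= <-.
Qed.

Lemma low_top i : ord_low (ord_top i) = i.
Proof. by rewrite /ord_low /ord_top cast_ordK (unsplitK (inl _ i)). Qed.

Lemma in_bot_top i : in_bot (ord_top i) = false.
Proof. by rewrite /in_bot /ord_top cast_ordK (unsplitK (inl _ i)). Qed.

Lemma low_bot i : ord_low (ord_bot i) = i.
Proof. by rewrite /ord_low /ord_bot cast_ordK (unsplitK (inr _ i)). Qed.

Lemma in_bot_bot i : in_bot (ord_bot i) = true.
Proof. by rewrite /in_bot /ord_bot cast_ordK (unsplitK (inr _ i)). Qed.

Lemma ord_top_inj : injective ord_top.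
Proof. by move=> i j /(congr1 ord_low); rewrite !low_top. Qed.

Lemma ord_bot_inj : injective ord_bot.
Proof. by move=> i j /(congr1 ord_low); rewrite !low_bot. Qed.

Lemma ord_top_neq_bot i j : ord_top i <> ord_bot j.
Proof. by move=> /(congr1 in_bot); rewrite in_bot_top in_bot_bot. Qed.

Lemma big_ord_halves (R : Type) (idx : R) (op : Monoid.com_law idx)
    (F : 'I_(2 ^ p.+1) -> R) :
  \big[op/idx]_x F x =
  op (\big[op/idx]_i F (ord_top i)) (\big[op/idx]_i F (ord_bot i)).
Proof.
rewrite (reindex (cast_ord (sylvester_dim p))) ?big_split_ord //.
by exists (cast_ord (esym (sylvester_dim p))) => x _; rewrite ?cast_ordK ?cast_ordKV.
Qed.

End Halves.

Local Notation H := (sylvester int).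

Lemma sylvester0 (i j : 'I_(2 ^ 0)) : H 0 i j = 1.
Proof. by rewrite /= mxE (ord1 i) (ord1 j). Qed.

Lemma sylvester_top p i x : H p.+1 (ord_top i) x = H p i (ord_low x).
Proof.
rewrite [in LHS](ord_splitK x) /=; case: (in_bot x);
by rewrite castmxE /ord_top /ord_bot !cast_ordK ?block_mxEul ?block_mxEur.
Qed.

Lemma sylvester_bot p i x : H p.+1 (ord_bot i) x = (-1) ^+ in_bot x * H p i (ord_low x).
Proof.
rewrite [in LHS](ord_splitK x) /=; case: (in_bot x);
by rewrite castmxE /ord_top /ord_bot !cast_ordK ?block_mxEdl ?block_mxEdr
  ?expr1 ?expr0 ?mulN1r ?mul1r ?mxE.
Qed.

Lemma is_sign_sylvester p i j : is_sign (H p i j).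
Proof.
elim: p i j => [|p IH] i j; first by rewrite sylvester0 /is_sign eqxx.
rewrite [i]ord_splitK; case: (in_bot i); rewrite ?sylvester_bot ?sylvester_top //.
exact/is_signM/IH/is_sign_signr.
Qed.

Lemma map_sylvester (R S : pzRingType) (f : {rmorphism R -> S}) p :
  map_mx f (sylvester R p) = sylvester S p.
Proof.
elim: p => [|p IH] /=; first by rewrite map_mx1.
by rewrite map_castmx map_block_mx map_mxN IH.
Qed.

(** * Permanents of sets of columns *)

Definition img n (J : finType) (s : {ffun 'I_n -> J}) : {set J} := [set s i | i : 'I_n].

(* The permanent of the submatrix of H(2^p) formed by the columns w j, j in S
   (a column may be repeated); it vanishes unless #|S| = 2^p. *)
Definition perm_cols p (J : finType) (w : J -> 'I_(2 ^ p)) (S : {set J}) : int :=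
  \sum_(s : {ffun 'I_(2 ^ p) -> J} | injectiveb s && (img s == S))
     \prod_i H p i (w (s i)).

Section Glue.

Variables (p : nat) (J : finType).
Implicit Types a b : {ffun 'I_(2 ^ p) -> J}.

Definition glue a b : {ffun 'I_(2 ^ p.+1) -> J} :=
  [ffun x => if in_bot x then b (ord_low x) else a (ord_low x)].

Lemma glue_top a b i : glue a b (ord_top i) = a i.
Proof. by rewrite ffunE in_bot_top low_top. Qed.

Lemma glue_bot a b i : glue a b (ord_bot i) = b i.
Proof. by rewrite ffunE in_bot_bot low_bot. Qed.

Lemma img_glue a b : img (glue a b) = img a :|: img b.
Proof.
apply/setP => y; rewrite inE; apply/imsetP/orP => [[x _ ->] | [] /imsetP [i _ ->]].
- by rewrite (ord_splitK x); case: (in_bot x); rewrite ?glue_top ?glue_bot;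
    [right | left]; apply: imset_f.
- by exists (ord_top i); rewrite ?glue_top.
- by exists (ord_bot i); rewrite ?glue_bot.
Qed.

Lemma injective_glue a b :
  injectiveb (glue a b) = [&& injectiveb a, injectiveb b & [disjoint img a & img b]].
Proof.
apply/injectiveP/and3P => [inj_g | [/injectiveP inj_a /injectiveP inj_b dab]].
  have inj_a : injective a.
    by move=> i j eq_a; apply/ord_top_inj/inj_g; rewrite !glue_top.
  have inj_b : injective b.
    by move=> i j eq_b; apply/ord_bot_inj/inj_g; rewrite !glue_bot.
  split; [exact/injectiveP | exact/injectiveP |].
  rewrite disjoints_subset; apply/subsetP => y /imsetP [i _ ->].
  rewrite inE; apply/imsetP => [[j _ eq_ab]].
  by apply: (@ord_top_neq_bot p i j); apply: inj_g; rewrite glue_top glue_bot.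
have neq_ab i j : a i <> b j.
  move=> eq_ab; have ai : a i \in img a by apply/imsetP; exists i.
  have bj : b j \in img b by apply/imsetP; exists j.
  by move: (disjointFr dab ai); rewrite eq_ab bj.
move=> x y; rewrite [x]ord_splitK [y]ord_splitK.
case: (in_bot x); case: (in_bot y); rewrite ?glue_top ?glue_bot.
- by move/inj_b ->.
- by move/esym/neq_ab.
- by move/neq_ab.
- by move/inj_a ->.
Qed.

Lemma glue_onto a b (S : {set J}) :
  injectiveb (glue a b) && (img (glue a b) == S) =
  (injectiveb a && (img a \subset S)) && (injectiveb b && (img b == S :\: img a)).
Proof.
rewrite injective_glue img_glue.
by case: (injectiveb a); case: (injectiveb b); rewrite /= ?andbF ?disjoint_setU_eq.
Qed.

End Glue.

Definition bot_sign p (J : finType) (w : J -> 'I_(2 ^ p.+1)) (X : {set J}) : int :=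
  \prod_(j in X) (-1) ^+ in_bot (w j).

Lemma prod_sylvester_glue p (J : finType) (w : J -> 'I_(2 ^ p.+1))
    (a b : {ffun 'I_(2 ^ p) -> J}) :
  injective b ->
  \prod_x H p.+1 x (w (glue a b x)) =
  \prod_i H p i (ord_low (w (a i))) *
  (bot_sign w (img b) * \prod_i H p i (ord_low (w (b i)))).
Proof.
move=> inj_b; rewrite big_ord_halves; congr (_ * _).
  by apply: eq_bigr => i _; rewrite glue_top sylvester_top.
rewrite /bot_sign /img big_imset /=; last by move=> i j _ _; apply: inj_b.
by rewrite -big_split /=; apply: eq_bigr => i _; rewrite glue_bot sylvester_bot.
Qed.

Definition laplace_term p (J : finType) (w : J -> 'I_(2 ^ p.+1)) (S Y : {set J}) : int :=
  bot_sign w (S :\: Y) * perm_cols (fun j => ord_low (w j)) Y *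
  perm_cols (fun j => ord_low (w j)) (S :\: Y).

(* Laplace expansion along the top and bottom halves of the rows: the columns
   Y meet the top rows, the columns S :\: Y the bottom ones. *)
Lemma perm_cols_rec p (J : finType) (w : J -> 'I_(2 ^ p.+1)) (S : {set J}) :
  perm_cols w S = \sum_(Y : {set J} | Y \subset S) laplace_term w S Y.
Proof.
rewrite /perm_cols.
rewrite (reindex (fun ab : {ffun 'I_(2 ^ p) -> J} * {ffun 'I_(2 ^ p) -> J} =>
                    glue ab.1 ab.2)) /=; last first.
  exists (fun s : {ffun 'I_(2 ^ p.+1) -> J} =>
            ([ffun i => s (ord_top i)], [ffun i => s (ord_bot i)])) => [[a b] _ | s _] /=.
    by congr pair; apply/ffunP => i; rewrite ffunE ?glue_top ?glue_bot.
  by apply/ffunP => x; rewrite ffunE [in RHS](ord_splitK x); case: (in_bot x); rewrite ffunE.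
under eq_bigl => ab do rewrite glue_onto.
rewrite -(pair_big_dep (fun a : {ffun 'I_(2 ^ p) -> J} => injectiveb a && (img a \subset S))
          (fun a b : {ffun 'I_(2 ^ p) -> J} => injectiveb b && (img b == S :\: img a))
          (fun a b => \prod_x H p.+1 x (w (glue a b x)))).
rewrite (partition_big (fun a : {ffun 'I_(2 ^ p) -> J} => img a) (fun Y => Y \subset S));
  last by move=> a /andP [].
apply: eq_bigr => Y sYS; rewrite /laplace_term -mulrA big_distrl big_distrr.
apply: eq_big => [a | a /andP [inj_a /eqP img_a]].
  by case: (img a =P Y) => [->|_]; rewrite ?sYS ?andbF ?andbT.
rewrite [RHS]/= mulrCA !big_distrr [RHS]/=.
apply: eq_big => [b | b /andP [/injectiveP inj_b /eqP img_b]]; first by rewrite img_a.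
by rewrite prod_sylvester_glue // img_b img_a mulrCA.
Qed.

Lemma perm_cols_card p (J : finType) (w : J -> 'I_(2 ^ p)) (X : {set J}) :
  #|X| != (2 ^ p)%N -> perm_cols w X = 0.
Proof.
move=> cardX; rewrite /perm_cols big_pred0 // => s.
apply/negP => /andP [/injectiveP inj_s /eqP img_s].
by move: cardX; rewrite -img_s /img card_imset // card_ord eqxx.
Qed.

Lemma perm_cols_single (J : finType) (w : J -> 'I_(2 ^ 0)) (X : {set J}) :
  #|X| = 1%N -> perm_cols w X = 1.
Proof.
move=> /eqP /cards1P [j0 ->]; rewrite /perm_cols (big_pred1 [ffun=> j0]); last first.
  move=> s; apply/andP/eqP => [[_ /eqP img_s] | ->].
    by apply/ffunP => i; rewrite ffunE; apply/set1P; rewrite -img_s imset_f.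
  split; first by apply/injectiveP => i j _; rewrite (ord1 i) (ord1 j).
  apply/eqP/setP => y; rewrite in_set1; apply/imsetP/eqP => [[i _ ->] | ->].
    by rewrite ffunE.
  by exists ord0; rewrite ?ffunE.
by apply: big1 => i _; rewrite sylvester0.
Qed.

Lemma permanent_sylvester p :
  permanent (H p) = perm_cols (fun j : 'I_(2 ^ p) => j) [set: 'I_(2 ^ p)].
Proof.
rewrite /perm_cols /permanent (reindex_onto (fun s : 'S_(2 ^ p) => pval s)
  (fun f => insubd (1%g : 'S_(2 ^ p)) f)) => [|f /andP [inj_f _]]; last first.
  by rewrite insubdK.
symmetry; apply: eq_big => [s | s _].
  rewrite valKd eqxx andbT (valP s) /=.
  rewrite eqEcard subsetT cardsT /img card_imset ?card_ord ?leqnn //.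
  by move=> i j; rewrite pvalE => /perm_inj.
by apply: eq_bigr => i _; rewrite pvalE.
Qed.

(** * Characters and the zero-XOR condition *)

Definition col_char p (J : finType) (w : J -> 'I_(2 ^ p)) (X : {set J})
    (c : 'I_(2 ^ p)) : int :=
  \prod_(j in X) H p c (w j).

(* As H i j = (-1)^<i, j> on binary digits, this says that the labels w j,
   j in X, have zero XOR. *)
Definition zero_xor p (J : finType) (w : J -> 'I_(2 ^ p)) (X : {set J}) : bool :=
  [forall c, col_char w X c == 1].

Section Characters.

Variables (p : nat) (J : finType).
Implicit Types X Y : {set J}.

Lemma is_sign_bot_sign (w : J -> 'I_(2 ^ p.+1)) X : is_sign (bot_sign w X).
Proof. by apply: is_sign_prod => j _; apply: is_sign_signr. Qed.

Lemma col_char_setD (w : J -> 'I_(2 ^ p)) X Y c : Y \subset X ->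
  col_char w X c = col_char w Y c * col_char w (X :\: Y) c.
Proof. by move=> sYX; rewrite /col_char (big_setID Y) /= (setIidPr sYX). Qed.

Lemma bot_sign_setD (w : J -> 'I_(2 ^ p.+1)) X Y : Y \subset X ->
  bot_sign w X = bot_sign w Y * bot_sign w (X :\: Y).
Proof. by move=> sYX; rewrite /bot_sign (big_setID Y) /= (setIidPr sYX). Qed.

Lemma zero_xor_setD (w : J -> 'I_(2 ^ p)) X Y : Y \subset X -> zero_xor w X ->
  zero_xor w (X :\: Y) = zero_xor w Y.
Proof.
move=> sYX /forallP zX; apply/forallP/forallP => zY c; apply/eqP;
  have /eqP := zX c; rewrite (col_char_setD _ _ sYX); move/eqP: (zY c) => ->.
  by rewrite mulr1.
by rewrite mul1r.
Qed.

Lemma zero_xor_compl (w : J -> 'I_(2 ^ p)) X Y : Y \subset X ->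
  zero_xor w Y -> zero_xor w (X :\: Y) -> zero_xor w X.
Proof.
move=> sYX /forallP zY /forallP zXY; apply/forallP => c.
by rewrite (col_char_setD _ _ sYX) (eqP (zY c)) (eqP (zXY c)) mulr1.
Qed.

Lemma bot_sign_compl (w : J -> 'I_(2 ^ p.+1)) X Y : Y \subset X ->
  bot_sign w Y = bot_sign w (X :\: Y) * bot_sign w X.
Proof.
by move=> sYX; rewrite (bot_sign_setD _ sYX) mulrCA is_sign_sqr ?is_sign_bot_sign ?mulr1.
Qed.

Variable w : J -> 'I_(2 ^ p.+1).
Let u j := ord_low (w j).

Lemma col_char_top X c : col_char w X (ord_top c) = col_char u X c.
Proof. by apply: eq_bigr => j _; rewrite sylvester_top. Qed.

Lemma col_char_bot X c : col_char w X (ord_bot c) = bot_sign w X * col_char u X c.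
Proof.
by rewrite /col_char /bot_sign -big_split; apply: eq_bigr => j _; rewrite sylvester_bot.
Qed.

Lemma zero_xor_rec X : zero_xor w X = zero_xor u X && (bot_sign w X == 1).
Proof.
apply/forallP/andP => [zX | [/forallP zX /eqP sgX] x].
  have zuX c : col_char u X c = 1 by have /eqP := zX (ord_top c); rewrite col_char_top.
  split; first by apply/forallP => c; rewrite zuX.
  have c0 : 'I_(2 ^ p) by exists 0%N; rewrite expn_gt0.
  by have /eqP := zX (ord_bot c0); rewrite col_char_bot zuX mulr1 => ->.
by rewrite [x]ord_splitK; case: (in_bot x); rewrite ?col_char_top ?col_char_bot ?sgX ?mul1r.
Qed.

End Characters.

(* Orthogonality of the characters c |-> H c j of (Z/2)^p. *)
Lemma sum_col_char p (J : finType) (w : J -> 'I_(2 ^ p)) (X : {set J}) :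
  \sum_c col_char w X c = if zero_xor w X then (2 ^ p)%:R else 0.
Proof.
elim: p w => [|p IH] w.
  have char1 c : col_char w X c = 1 by apply: big1 => j _; rewrite sylvester0.
  have -> : zero_xor w X by apply/forallP => c; rewrite char1.
  by rewrite (eq_bigr (fun _ => 1)) // sumr_const card_ord.
rewrite big_ord_halves /=.
under eq_bigr => c _ do rewrite col_char_top.
under [X in _ + X]eq_bigr => c _ do rewrite col_char_bot.
rewrite -big_distrr /= IH zero_xor_rec.
case: (zero_xor _ X); last by rewrite mulr0 addr0.
case/orP: (is_sign_bot_sign w X) => /eqP ->; last by rewrite mulN1r subrr.
by rewrite eqxx mul1r expnS mulnC natrM mulr2n mulrDr mulr1.
Qed.

Lemma laplace_term_compl p (J : finType) (w : J -> 'I_(2 ^ p.+1)) (S Y : {set J}) :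
  Y \subset S -> laplace_term w S (S :\: Y) = bot_sign w S * laplace_term w S Y.
Proof.
by move=> sYS; rewrite /laplace_term setDDK // (bot_sign_compl _ sYS); ring.
Qed.

Lemma perm_cols_eq0 p (J : finType) (w : J -> 'I_(2 ^ p)) (S : {set J}) :
  ~~ zero_xor w S -> perm_cols w S = 0.
Proof.
elim: p w S => [|p IH] w S nzS.
  by case/negP: nzS; apply/forallP => c; rewrite /col_char big1 // => j _; rewrite sylvester0.
rewrite perm_cols_rec; set u := fun j => ord_low (w j).
case zuS : (zero_xor u S); last first.
  apply: big1 => Y sYS; rewrite /laplace_term -/u.
  case: (boolP (zero_xor u Y)) => [zY | /IH ->]; last by rewrite mulr0 mul0r.
  case: (boolP (zero_xor u (S :\: Y))) => [zY' | /IH ->]; last by rewrite mulr0.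
  by rewrite (zero_xor_compl sYS zY zY') in zuS.
have sgS : bot_sign w S = -1.
  move: nzS; rewrite zero_xor_rec zuS /=.
  by case/orP: (is_sign_bot_sign w S) => /eqP ->.
set T := \sum_(Y | _) _; have : T = - T.
  rewrite /T {1}sum_subset_compl -sumrN; apply: eq_bigr => Y sYS.
  by rewrite laplace_term_compl // sgS mulN1r.
by lia.
Qed.

Definition zero_xor_half p (J : finType) (u : J -> 'I_(2 ^ p)) (Y : {set J}) : bool :=
  (#|Y| == 2 ^ p)%N && zero_xor u Y.

Section HalfCount.

Variables (p : nat) (J : finType) (u : J -> 'I_(2 ^ p)) (S : {set J}).
Hypotheses (cardS : #|S| = (2 * 2 ^ p)%N) (zS : zero_xor u S).

(* Counting the halves with zero XOR by summing the characters c |-> H c j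
   over all c turns the count into elementary symmetric functions of signs. *)
Lemma count_zero_xor_halves :
  ((4 : int) %| \sum_(Y : {set J} | Y \subset S) (if zero_xor_half u Y then 1 else 0)
                - ('C(2 * 2 ^ p, 2 ^ p))%:R)%Z.
Proof.
set N := \sum_(Y | _) _.
have char_sum : 2 ^+ p * N = \sum_c \sum_(Y : {set J} | (Y \subset S) && (#|Y| == 2 ^ p)%N)
                                   col_char u Y c.
  rewrite exchange_big /= /N (bigID (fun Y : {set J} => (#|Y| == 2 ^ p)%N)) /=.
  rewrite [X in _ + X]big1 ?addr0 => [|Y /andP [_ /negbTE]]; last first.
    by rewrite /zero_xor_half => ->.
  rewrite mulr_sumr; apply: eq_bigr => Y /andP [_ /eqP cardY].
  rewrite sum_col_char /zero_xor_half cardY eqxx /=.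
  by case: (zero_xor u Y); rewrite ?mulr1 ?mulr0 ?natrX.
have : ((2 ^+ p.+2 : int) %| 2 ^+ p * (N - ('C(2 * 2 ^ p, 2 ^ p))%:R))%Z.
  have const_sum : 2 ^+ p * ('C(2 * 2 ^ p, 2 ^ p))%:R =
            \sum_(c : 'I_(2 ^ p)) ('C(2 * 2 ^ p, 2 ^ p))%:R :> int.
    by rewrite sumr_const card_ord -[RHS]mulr_natl natrX.
  rewrite mulrBr char_sum const_sum -sumrB.
  apply: rpred_sum => c _; apply: sum_prod_halves_signs => //.
  - by move=> j _; apply: is_sign_sylvester.
  - by move/forallP: zS => /(_ c) /eqP.
by rewrite exprSr exprSr -mulrA dvdz_mul2l // expf_neq0.
Qed.

Lemma odd_count_zero_xor_halves j0 : j0 \in S ->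
  exists r : int, \sum_(Y : {set J} | (Y \subset S) && (j0 \in Y))
      (if zero_xor_half u Y then 1 else 0) = 2 * r + 1.
Proof.
move=> j0S.
have half_compl (Y : {set J}) : Y \subset S ->
    (if zero_xor_half u (S :\: Y) then 1 else 0 : int) = if zero_xor_half u Y then 1 else 0.
  move=> sYS; have := subset_leq_card sYS; rewrite cardS => leYS.
  rewrite /zero_xor_half zero_xor_setD // cardsDS // cardS.
  by rewrite (_ : (2 * 2 ^ p - #|Y| == 2 ^ p) = (#|Y| == 2 ^ p))%N //; apply/eqP/eqP; lia.
have := count_zero_xor_halves; rewrite (sum_subset_pair j0S half_compl).
set M := \sum_(Y | _) _; have [c odd_c ->] := bin_central_pow2 p.
rewrite (_ : M *+ 2 - (2 * c)%:R = 2 * (M - c%:R)); last by rewrite natrM mulr2n; ring.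
rewrite (_ : (4 : int) = 2 * 2) // dvdz_mul2l // => /dvdzP [q eq_q].
exists (q + (c./2)%:R).
have ec : c = (2 * c./2).+1 by rewrite -{1}(odd_double_half c) odd_c mul2n add1n.
by move: (c./2) ec eq_q => h -> eq_q; lia.
Qed.

End HalfCount.

Lemma perm_cols_odd p (J : finType) (w : J -> 'I_(2 ^ p)) (S : {set J}) :
  #|S| = (2 ^ p)%N -> zero_xor w S ->
  exists t, perm_cols w S = 2 ^+ (2 ^ p).-1 * (2 * t + 1).
Proof.
elim: p w S => [|p IH] w S cardS zS; first by exists 0; rewrite perm_cols_single.
set u := fun j => ord_low (w j).
move: zS; rewrite zero_xor_rec => /andP [zuS /eqP sgS].
have cardS2 : #|S| = (2 * 2 ^ p)%N by rewrite cardS expnS.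
have [j0 j0S] : exists j0, j0 \in S by apply/card_gt0P; rewrite cardS expn_gt0.
rewrite perm_cols_rec (sum_subset_pair j0S) => [|Y sYS]; last first.
  by rewrite laplace_term_compl // sgS mul1r.
set E := ((2 ^ p).-1 + (2 ^ p).-1)%N.
have term (Y : {set J}) : exists t : int, Y \subset S ->
    laplace_term w S Y = if zero_xor_half u Y then 2 ^+ E * (2 * t + 1) else 0.
  case sYS : (Y \subset S); last by exists 0.
  rewrite /zero_xor_half /laplace_term -/u.
  case: (boolP (#|Y| == 2 ^ p)%N) => [/eqP cardY | cardY]; last first.
    by exists 0 => _; rewrite perm_cols_card // mulr0 mul0r.
  case: (boolP (zero_xor u Y)) => [zY | nzY]; last first.
    by exists 0 => _; rewrite (perm_cols_eq0 nzY) mulr0 mul0r.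
  have cardY' : #|S :\: Y| = (2 ^ p)%N by rewrite cardsDS // cardS2 cardY; lia.
  have [t1 ->] := IH u Y cardY zY.
  have [t2 ->] := IH u _ cardY' (etrans (zero_xor_setD sYS zuS) zY).
  rewrite exprD; case/orP: (is_sign_bot_sign w (S :\: Y)) => /eqP ->.
    by exists (2 * t1 * t2 + t1 + t2) => _; ring.
  by exists (- (2 * t1 * t2 + t1 + t2) - 1) => _; ring.
have [t ht] := fin_all_exists term.
have [r count_r] := odd_count_zero_xor_halves cardS2 zuS j0S.
rewrite (eq_bigr (fun Y => if zero_xor_half u Y then 2 ^+ E * (2 * t Y + 1) else 0));
  last by move=> Y /andP [sYS _]; rewrite ht.
have [s ->] := sum_odd_multiples E t count_r; exists s.
have -> : (2 ^ p.+1).-1 = E.+1 by rewrite /E expnS; have := expn_gt0 2 p; lia.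
by rewrite exprS mulr2n; ring.
Qed.

Lemma zero_xor_ord p : (2 <= p)%N -> zero_xor (fun j : 'I_(2 ^ p) => j) [set: 'I_(2 ^ p)].
Proof.
case: p => [//|q] le2q; rewrite zero_xor_rec; apply/andP; split.
  apply/forallP => c; rewrite /col_char (eq_bigl xpredT) => [|j]; last by rewrite in_setT.
  rewrite big_ord_halves /=.
  under eq_bigr => i _ do rewrite low_top.
  under [X in _ * X]eq_bigr => i _ do rewrite low_bot.
  by rewrite is_sign_sqr // is_sign_prod // => i _; apply: is_sign_sylvester.
rewrite /bot_sign (eq_bigl xpredT) => [|j]; last by rewrite in_setT.
rewrite big_ord_halves /=.
under eq_bigr => i _ do rewrite in_bot_top.
under [X in _ * X]eq_bigr => i _ do rewrite in_bot_bot.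
rewrite big1 // mul1r prodr_const card_ord -exprM mul1n -signr_odd oddX.
by case: q le2q.
Qed.

Theorem mainTheorem10 (p : nat) (hp : (2 <= p)%N) :
  permanent (sylvester int p) != 0 /\
  ~~ suppressed (sylvester_interferometer p) (ord_tuple (2 ^ p)) (ord_tuple (2 ^ p)).
Proof.
have permH : permanent (sylvester int p) != 0.
  have cardT : #|[set: 'I_(2 ^ p)]| = (2 ^ p)%N by rewrite cardsT card_ord.
  rewrite permanent_sylvester; have [t ->] := perm_cols_odd cardT (zero_xor_ord hp).
  by rewrite mulf_neq0 ?expf_neq0 //; apply/eqP; lia.
split=> //; rewrite /suppressed bosonic_amplitude_ord_tuple /sylvester_interferometer.
rewrite permanentZ -(map_sylvester (intr : int -> algC)) permanent_map.
rewrite mulf_neq0 ?intr_eq0 // expf_neq0 // invr_eq0 sqrtC_eq0 pnatr_eq0.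
by rewrite expn_eq0.
Qed.
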